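(* Consider the hierarchical imitation learning setting and the algorithm hg-DAgger (hierarchically guided DAgger) with halving learners described in the context. Suppose the meta-controller class $\mathcal{M}$ and the subpolicy class $\Pi_{\mathrm{LO}}$ are finite and the expert is realizable: $\mu^\star\in\mathcal{M}$ and $\pi^\star_g\in\Pi_{\mathrm{LO}}$ for every $g\in\mathcal{G}$. Then the total cost incurred by the expert in hg-DAgger by round $T$ is at most $$T\,C^{I}_{\mathrm{FULL}} + \bigl(\log_2|\mathcal{M}| + |\mathcal{G}^\star|\log_2|\Pi_{\mathrm{LO}}|\bigr)\bigl(C^{L}_{\mathrm{HI}} + H_{\mathrm{HI}}\,C^{I}_{\mathrm{LO}}\bigr) + \bigl(|\mathcal{G}^\star|\log_2|\Pi_{\mathrm{LO}}|\bigr)\,C^{L}_{\mathrm{LO}},$$ where $\mathcal{G}^\star:=\mu^\star(\mathcal{S})\subseteq\mathcal{G}$ is the set of subgoals actually used by the expert.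
   Context: Setting. There is a state space $\mathcal{S}$, an action space $\mathcal{A}$ and a set of subgoals $\mathcal{G}$. A hierarchical policy consists of a meta-controller $\mu:\mathcal{S}\to\mathcal{G}$ and, for each $g\in\mathcal{G}$, a subpolicy $\pi_g$ which maps a state to an action together with a termination signal $\omega\in\{0,1\}$ (termination is treated as part of an augmented low-level action). An episode starts at a start state $s$; repeatedly, the meta-controller chooses $g=\mu(s)$, then $\pi_g$ is rolled out from $s$ until it signals termination, producing a low-level trajectory $\tau$ of state–action(–termination) pairs, and $s$ is set to the last state of $\tau$; an episode consists of at most $H_{\mathrm{HI}}$ such high-level steps. The high-level trajectory is $\tau_{\mathrm{HI}}=\{(s_h,g_h)\}_h$ and the full trajectory $\tau_{\mathrm{FULL}}$ is the concatenation of the low-level trajectories. The expert has a hierarchical policy $(\mu^\star,\{\pi^\star_g\}_{g\in\mathcal{G}})$. Expert operations and costs (each invocation costs the stated amount): $\mathrm{Inspect}_{\mathrm{FULL}}(\tau_{\mathrm{FULL}})$ returns Pass/Fail according to whether the overall task was accomplished, cost $C^{I}_{\mathrm{FULL}}$; $\mathrm{Label}_{\mathrm{HI}}(\tau_{\mathrm{HI}})$ returns the expert's subgoal $g^\star_h=\mu^\star(s_h)$ for every high-level state $s_h$, cost $C^{L}_{\mathrm{HI}}$; $\mathrm{Inspect}_{\mathrm{LO}}(\tau;g)$ returns Pass/Fail according to whether the low-level trajectory $\tau$ accomplished subgoal $g$, cost $C^{I}_{\mathrm{LO}}$; $\mathrm{Label}_{\mathrm{LO}}(\tau;g)$ returns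 the expert's labels $\pi^\star_g(s)$ for all states $s$ in $\tau$, cost $C^{L}_{\mathrm{LO}}$. The expert is consistent: a subpolicy execution that agrees with $\pi^\star_g$ on every visited state passes $\mathrm{Inspect}_{\mathrm{LO}}(\cdot;g)$, and an episode in which every high-level choice agrees with $\mu^\star$ and every low-level execution agrees with the corresponding $\pi^\star_g$ passes $\mathrm{Inspect}_{\mathrm{FULL}}$. Learners. $\mathcal{M}$ is a finite class of meta-controllers and $\Pi_{\mathrm{LO}}$ a finite class of subpolicies. The meta-controller and each subpolicy $\pi_g$ are learned by the halving algorithm: it maintains a version space (initially $\mathcal{M}$, resp. $\Pi_{\mathrm{LO}}$), predicts by majority vote of the version space, and upon receiving labeled data removes all policies inconsistent with the labels. hg-DAgger (interactive rounds, no behavioral-cloning warm start). In each round $t=1,\dots,T$: obtain a new environment instance with a start state; execute the current hierarchical policy, recording $(s_h,g_h,\tau_h)$ for each high-level step; call $\mathrm{Inspect}_{\mathrm{FULL}}$ on the full trajectory. If it returns Fail: call $\mathrm{Label}_{\mathrm{HI}}(\tau_{\mathrm{HI}})$ to obtain $g^\star_h$; then process $h=1,2,\dots$ in order as long as $g_h=g^\star_h$: call $\mathrm{Inspect}_{\mathrm{LO}}(\tau_h;g_h)$, and if it returns Fail, call $\mathrm{Label}_{\mathrm{LO}}(\tau_h;g_h)$, add these labels to the data of subgoal $g_h$ and stop processing; finally add the high-level labels $\{(s_h,g^\star_h)\}$ to the meta-controller data. At the end of the round, update all halving learners on their data. The total expert cost is the sum of costs of all operations invoked. *)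

From HB Require Import structures.
From mathcomp Require Import all_boot all_order all_algebra.
From mathcomp Require Import boolp reals exp.

Set Implicit Arguments.
Unset Strict Implicit.
Unset Printing Implicit Defensive.

Import Order.TTheory GRing.Theory Num.Theory.
Local Open Scope ring_scope.

Definition log2 (R : realType) (x : R) : R := ln x / ln 2.

(* A low-level trajectory: the visited states with the augmented action
   (action, termination bit) emitted there. *)
Notation traj S A := (seq (S * (A * bool)))%type.

(* At each state the
   subpolicy emits (a, w); the pair is recorded; if w = true the subpolicy
   terminates (the last state of the trajectory is the current state),
   otherwise the action is executed.  [n] is a cap on the number of
   low-level steps (needed to make the rollout a total function). *)
Fixpoint rollout (S : Type) (A : eqType) (step : S -> A -> S)
    (pi : S -> A * bool) (n : nat) (s : S) : traj S A * S :=
  match n with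
  | 0 => ([::], s)
  | n'.+1 =>
      let aw := pi s in
      if aw.2 then ([:: (s, aw)], s)
      else let r := rollout step pi n' (step s aw.1) in ((s, aw) :: r.1, r.2)
  end.

Fixpoint episode (S : Type) (A : eqType) (G : Type) (step : S -> A -> S)
    (stop : S -> bool) (HLO : nat) (mu : S -> G) (pis : G -> S -> A * bool)
    (h : nat) (s : S) : seq (S * G * traj S A) :=
  match h with
  | 0 => [::]
  | h'.+1 =>
      if stop s then [::]
      else
        let g := mu s in
        let r := rollout step (pis g) HLO s in
        (s, g, r.1) :: episode step stop HLO mu pis h' r.2
  end.

(* Majority (plurality) vote of the version space V of the class indexed by
   f : I -> S -> Y at state s: an element of the multiset of predictions with
   maximal multiplicity (y0 is only used if V is empty). *)
Definition majority (I : finType) (S : Type) (Y : eqType) (f : I -> S -> Y)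
    (V : {set I}) (y0 : Y) (s : S) : Y :=
  let ys := [seq f i s | i <- enum V] in
  foldr (fun y best => if (count_mem best ys < count_mem y ys)%N then y else best)
        (head y0 ys) ys.

Definition halve (I : finType) (S : Type) (Y : eqType) (f : I -> S -> Y)
    (V : {set I}) (data : seq (S * Y)) : {set I} :=
  [set i in V | all (fun p => f i p.1 == p.2) data].

(* Low-level processing after a failed full inspection: go through h = 1,2,..
   while g_h = g*_h, calling Inspect_LO; stop at the first failure, which is
   then labeled. *)
Fixpoint lo_process (S : Type) (A : eqType) (G : eqType)
    (inspLO : traj S A -> G -> bool) (mustar : S -> G)
    (recs : seq (S * G * traj S A)) : nat * option (G * traj S A) :=
  match recs with
  | [::] => (0%N, None)
  | x :: r =>
      if x.1.2 == mustar x.1.1 then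
        if inspLO x.2 x.1.2 then
          let p := lo_process inspLO mustar r in (p.1.+1, p.2)
        else (1%N, Some (x.1.2, x.2))
      else (0%N, None)
  end.

Section HgDagger.
Variables (R : realType) (S : Type) (A : eqType) (G : finType)
  (IM IP : finType) (mM : IM -> S -> G) (mP : IP -> S -> A * bool)
  (mustar : S -> G) (pistar : G -> S -> A * bool)
  (env : nat -> S -> A -> S) (s0 : nat -> S) (stop : nat -> S -> bool)
  (H_HI H_LO : nat)
  (inspFull : nat -> traj S A -> bool) (inspLO : nat -> traj S A -> G -> bool)
  (CIF CLH CIL CLL : R) (g0 : G) (a0 : A * bool).

Definition hg_state := ({set IM} * {ffun G -> {set IP}})%type.

Definition hg_round (t : nat) (st : hg_state) : hg_state * R :=
  let VM := st.1 in let VP := st.2 in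
  let mu := majority mM VM g0 in
  let pis := fun g => majority mP (VP g) a0 in
  let recs := episode (env t) (stop t) H_LO mu pis H_HI (s0 t) in
  if inspFull t (flatten [seq x.2 | x <- recs]) then (st, CIF)
  else
    let p := lo_process (inspLO t) mustar recs in
    let VM' := halve mM VM [seq (x.1.1, mustar x.1.1) | x <- recs] in
    let VP' := match p.2 with
               | None => VP
               | Some (g, tau) =>
                   [ffun g' => if g' == g
                               then halve mP (VP g') [seq (q.1, pistar g q.1) | q <- tau]
                               else VP g']
               end in
    ((VM', VP'),
     CIF + CLH + (p.1)%:R * CIL + (if p.2 is Some _ then CLL else 0)).

Fixpoint hg_run (T : nat) : hg_state * R :=
  match T with
  | 0 => ((setT, [ffun => setT]), 0)
  | T'.+1 =>
      let r := hg_run T' in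
      let r' := hg_round T'.+1 r.1 in
      (r'.1, r.2 + r'.2)
  end.

Definition hg_cost (T : nat) : R := (hg_run T).2.

End HgDagger.

Definition Gstar (S : Type) (G : finType) (mustar : S -> G) : {set G} :=
  [set g | `[< exists s, mustar s = g >]].

From HB Require Import structures.
From mathcomp Require Import all_boot all_order all_algebra.
From mathcomp Require Import boolp reals exp.
From mathcomp Require Import lra.

Set Implicit Arguments.
Unset Strict Implicit.
Unset Printing Implicit Defensive.
Import Order.TTheory GRing.Theory Num.Theory.
Local Open Scope ring_scope.

(* A potential argument.  With K = C^L_HI + H_HI C^I_LO, consider
     K (log2 |V_M| + sum_(g in G* ) log2 |V_g|) + C^L_LO sum_(g in G* ) log2 |V_g|,
   where V_M and V_g are the version spaces of the halving learners.  It starts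
   at the claimed bound, and it stays nonnegative because realizability keeps
   the expert in every version space.  By expert consistency, a round failing
   Inspect_FULL exposes either a state where the meta-controller's majority
   vote differs from mu*, or, in the labeled low-level execution for
   g = mu*(s) in G*, a state where the majority vote of the subpolicy learner
   for g differs from pi*_g.  The halving update then at least halves the
   corresponding version space, so the potential drops by at least the cost of
   the round beyond C^I_FULL. *)

Section BinaryLog.
Variable R : realType.

Lemma log2_nat_ge0 n : (0 < n)%N -> 0 <= log2 (n%:R : R).
Proof. by move=> n_gt0; rewrite /log2 divr_ge0 ?ln_ge0 ?ler1n // ltW // ln_gt0 ?ltr1n. Qed.

Lemma ler_log2_nat m n : (0 < m)%N -> (m <= n)%N -> log2 (m%:R : R) <= log2 n%:R.
Proof.
move=> m_gt0 le_mn; rewrite /log2 ler_pM2r ?invr_gt0 ?ln_gt0 ?ltr1n //.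
by rewrite ler_ln ?ler_nat // posrE ltr0n // (leq_trans m_gt0).
Qed.

Lemma log2_nat_double m n :
  (0 < m)%N -> (2 * m <= n)%N -> log2 (m%:R : R) + 1 <= log2 n%:R.
Proof.
move=> m_gt0 le_2m_n.
have ln2_gt0 : 0 < ln (2 : R) by rewrite ln_gt0 ?ltr1n.
have -> : log2 (m%:R : R) + 1 = log2 (2 * m)%:R.
  by rewrite /log2 natrM lnM ?posrE ?ltr0n // mulrDl divff ?gt_eqF // addrC.
by rewrite ler_log2_nat ?muln_gt0.
Qed.

End BinaryLog.

Lemma has_neq_all_eq (T : Type) (Z : eqType) (u a b : T -> Z) (s : seq T) :
  all (fun x => u x == a x) s -> ~~ all (fun x => u x == b x) s ->
  has (fun x => a x != b x) s.
Proof.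
elim: s => //= x s IHs /andP [/eqP ua all_a]; rewrite negb_and ua.
by case/orP => [-> // | /(IHs all_a) ->]; rewrite orbT.
Qed.

Section Halving.
Variables (I : finType) (S : Type) (Y : eqType) (f : I -> S -> Y).
Variables (V : {set I}) (y0 : Y).

Lemma card_set_in_count (P : pred I) : #|[set i in V | P i]| = count P (enum V).
Proof.
rewrite cardE -size_filter; apply/perm_size/uniq_perm.
- exact: enum_uniq.
- exact/filter_uniq/enum_uniq.
- by move=> i; rewrite mem_enum mem_filter inE mem_enum andbC.
Qed.

Lemma count_mem_foldr_plurality (ys : seq Y) b l y : y \in b :: l ->
  (count_mem y ys <= count_mem (foldr (fun y best =>
     if (count_mem best ys < count_mem y ys)%N then y else best) b l) ys)%N.
Proof.
elim: l => [|x l IHl] in y *; first by rewrite inE => /eqP ->.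
rewrite /= -/(foldr _ b l) !inE orbCA => /predU1P [-> | y_bl].
  by case: ltnP.
have le_y_r := IHl y y_bl; case: ltnP => // lt_r_x.
exact/ltnW/(leq_ltn_trans le_y_r).
Qed.

Lemma majority_plurality s y :
  (#|[set i in V | f i s == y]| <= #|[set i in V | f i s == majority f V y0 s]|)%N.
Proof.
set ys := [seq f i s | i <- enum V].
have card_eq z : #|[set i in V | f i s == z]| = count_mem z ys.
  by rewrite card_set_in_count count_map.
rewrite !card_eq; have [y_ys | y_ys] := boolP (y \in ys).
  by apply: count_mem_foldr_plurality; rewrite inE y_ys orbT.
by rewrite (count_memPn y_ys).
Qed.

Lemma card_majority_mistake s y : majority f V y0 s != y ->
  (2 * #|[set i in V | f i s == y]| <= #|V|)%N.
Proof.
move=> neq_y; set Ay := [set i in V | f i s == y].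
set Am := [set i in V | f i s == majority f V y0 s].
have disj : Ay :&: Am = set0.
  apply/eqP; rewrite -subset0; apply/subsetP => i.
  rewrite !inE => /andP [/andP [_ /eqP fy] /andP [_ /eqP fm]].
  by move: neq_y; rewrite -fm fy eqxx.
have sub_V : Ay :|: Am \subset V.
  by apply/subsetP => i; rewrite !inE => /orP [] /andP [].
rewrite mul2n -addnn (leq_trans (leq_add (leqnn _) (majority_plurality s y))) //.
by rewrite -cardsUI disj cards0 addn0 subset_leq_card.
Qed.

Lemma halve_subset data : halve f V data \subset V.
Proof. by apply/subsetP => i; rewrite inE => /andP []. Qed.

Lemma mem_halve_self (X : Type) (sx : X -> S) (xs : seq X) i : i \in V ->
  i \in halve f V [seq (sx x, f i (sx x)) | x <- xs].
Proof.
move=> iV; rewrite /halve inE iV all_map (@eq_all _ _ predT) ?all_predT //.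
by move=> x /=; rewrite eqxx.
Qed.

Lemma halve_mistake data : has (fun p => majority f V y0 p.1 != p.2) data ->
  (2 * #|halve f V data| <= #|V|)%N.
Proof.
elim: data => //= -[s y] data IHdata /orP [mistake | /IHdata le_V].
  apply: (leq_trans _ (card_majority_mistake mistake)); rewrite leq_mul2l.
  by apply/orP; right; apply/subset_leq_card/subsetP => i; rewrite !inE => /and3P [-> ->].
apply: (leq_trans _ le_V); rewrite leq_mul2l; apply/orP; right.
by apply/subset_leq_card/subsetP => i; rewrite !inE => /and3P [-> _ all_data].
Qed.

End Halving.

Section Rollouts.
Variables (S : Type) (A : eqType) (G : eqType) (step : S -> A -> S).

Lemma rollout_follows (pi : S -> A * bool) n s :
  all (fun q => q.2 == pi q.1) (rollout step pi n s).1.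
Proof.
elim: n s => //= n IHn s; case: (pi s).2 => /=; first by rewrite eqxx.
by rewrite eqxx IHn.
Qed.

Variables (stop : S -> bool) (HLO : nat) (mu : S -> G) (pis : G -> S -> A * bool).

Lemma size_episode h s : (size (episode step stop HLO mu pis h s) <= h)%N.
Proof. by elim: h s => //= h IHh s; case: (stop s); rewrite //= ltnS IHh. Qed.

Lemma episode_follows h s :
  all (fun x => x.1.2 == mu x.1.1) (episode step stop HLO mu pis h s).
Proof. by elim: h s => //= h IHh s; case: (stop s) => //=; rewrite eqxx IHh. Qed.

Lemma in_episode_rollout h s s' g tau :
  List.In (s', g, tau) (episode step stop HLO mu pis h s) ->
  tau = (rollout step (pis g) HLO s').1.
Proof.
elim: h s => //= h IHh s; case: (stop s) => //= -[[<- <- <-] // | ].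
exact: IHh.
Qed.

Variables (insp : traj S A -> G -> bool) (ms : S -> G).

Lemma lo_process_count_le recs : ((lo_process insp ms recs).1 <= size recs)%N.
Proof. by elim: recs => //= x recs IHrecs; case: ifP => // _; case: ifP. Qed.

Lemma lo_process_None recs : (lo_process insp ms recs).2 = None ->
  ~~ all (fun x => (x.1.2 == ms x.1.1) && insp x.2 x.1.2) recs ->
  ~~ all (fun x => x.1.2 == ms x.1.1) recs.
Proof.
elim: recs => //= x recs IHrecs; case: eqP => //= _.
by case: ifP => //= _ /IHrecs.
Qed.

Lemma lo_process_Some recs g tau : (lo_process insp ms recs).2 = Some (g, tau) ->
  exists s, [/\ List.In (s, g, tau) recs, g = ms s & ~~ insp tau g].
Proof.
elim: recs => //= -[[s g'] tau'] recs IHrecs /=; case: eqP => //= g'E.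
case: ifP => [_ /IHrecs [s' [in_s' gE failed]] | failed [<- <-]].
  by exists s'; split; [right | |].
by exists s; split; [left | | rewrite failed].
Qed.

End Rollouts.

Section HgDaggerAnalysis.
Variables (R : realType) (S : Type) (A : eqType) (G : finType)
  (IM IP : finType) (mM : IM -> S -> G) (mP : IP -> S -> A * bool)
  (mustar : S -> G) (pistar : G -> S -> A * bool)
  (env : nat -> S -> A -> S) (s0 : nat -> S) (stop : nat -> S -> bool)
  (H_HI H_LO : nat)
  (inspFull : nat -> traj S A -> bool) (inspLO : nat -> traj S A -> G -> bool)
  (CIF CLH CIL CLL : R) (g0 : G) (a0 : A * bool).

Hypotheses (CLH_ge0 : 0 <= CLH) (CIL_ge0 : 0 <= CIL) (CLL_ge0 : 0 <= CLL).

Hypothesis expert_consistent_LO : forall t pi s g,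
  let tau := (rollout (env t) pi H_LO s).1 in
  all (fun q => q.2 == pistar g q.1) tau -> inspLO t tau g.

Hypothesis expert_consistent_FULL : forall t mu pis,
  let recs := episode (env t) (stop t) H_LO mu pis H_HI (s0 t) in
  all (fun x => (x.1.2 == mustar x.1.1) && inspLO t x.2 x.1.2) recs ->
  inspFull t (flatten [seq x.2 | x <- recs]).

Lemma failed_episode_mistake t mu pis :
  let recs := episode (env t) (stop t) H_LO mu pis H_HI (s0 t) in
  ~~ inspFull t (flatten [seq x.2 | x <- recs]) ->
  if (lo_process (inspLO t) mustar recs).2 is Some (g, tau)
  then g \in Gstar mustar /\ has (fun q => pis g q.1 != pistar g q.1) tau
  else has (fun x => mu x.1.1 != mustar x.1.1) recs.
Proof.
move=> recs failed.
have not_all_good := contra (@expert_consistent_FULL t mu pis) failed.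
case lo_res: (lo_process _ _ recs).2 => [[g tau]|].
  have [s [in_s gE failed_LO]] := lo_process_Some lo_res.
  have tauE := in_episode_rollout in_s.
  split; first by rewrite /Gstar inE gE; apply/asboolP; exists s.
  apply: has_neq_all_eq; first by rewrite tauE; exact: rollout_follows.
  by apply: contra failed_LO; rewrite tauE; exact: expert_consistent_LO.
apply: has_neq_all_eq (episode_follows _ _ _ _ _ _ _) _.
exact: lo_process_None lo_res not_all_good.
Qed.

Definition round_budget : R := CLH + H_HI%:R * CIL.

Definition meta_potential (VM : {set IM}) : R := log2 #|VM|%:R.

Definition sub_potential (VP : {ffun G -> {set IP}}) : R :=
  \sum_(g in Gstar mustar) log2 #|VP g|%:R.

Definition potential (st : hg_state G IM IP) : R :=
  round_budget * (meta_potential st.1 + sub_potential st.2)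
  + CLL * sub_potential st.2.

Definition realizable (st : hg_state G IM IP) : Prop :=
  (exists2 i, i \in st.1 & mM i = mustar) /\
  (forall g, exists2 i, i \in st.2 g & mP i = pistar g).

Lemma round_budget_ge0 : 0 <= round_budget.
Proof. by rewrite addr_ge0 ?mulr_ge0. Qed.

Lemma potential_ge0 st : realizable st -> 0 <= potential st.
Proof.
case=> [[iM iM_VM _] expert_VP].
have sub_ge0 : 0 <= sub_potential st.2.
  apply: sumr_ge0 => g _; have [iP iP_VP _] := expert_VP g.
  by apply/log2_nat_ge0/card_gt0P; exists iP.
have meta_ge0 : 0 <= meta_potential st.1.
  by apply/log2_nat_ge0/card_gt0P; exists iM.
by apply: addr_ge0; apply: mulr_ge0; rewrite ?round_budget_ge0 ?addr_ge0.
Qed.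

Lemma potential_decrease st st' c :
  1 <= meta_potential st.1 - meta_potential st'.1
       + (sub_potential st.2 - sub_potential st'.2) ->
  c <= round_budget + CLL * (sub_potential st.2 - sub_potential st'.2) ->
  c + potential st' <= potential st.
Proof.
rewrite /potential; set m := meta_potential _; set m' := meta_potential _.
set p := sub_potential _; set p' := sub_potential _ => drop le_c.
have := ler_wpM2l round_budget_ge0 drop; rewrite mulr1 !(mulrDr, mulrN) => le_K.
move: le_c; rewrite !(mulrDr, mulrN) => le_c; lra.
Qed.

Lemma sub_potential_halving (VP VP' : {ffun G -> {set IP}}) g :
  g \in Gstar mustar ->
  (forall g', g' != g -> VP' g' = VP g') ->
  (0 < #|VP' g|)%N -> (2 * #|VP' g| <= #|VP g|)%N ->
  sub_potential VP' + 1 <= sub_potential VP.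
Proof.
move=> g_star VP'E VP'g_gt0 halved; rewrite /sub_potential !(bigD1 g g_star) /=.
rewrite (eq_bigr (fun g' => log2 #|VP g'|%:R)) => [|g' /andP [_ /VP'E ->] //].
by rewrite addrAC lerD2r log2_nat_double.
Qed.

Let round := hg_round mM mP mustar pistar env s0 stop H_HI H_LO inspFull inspLO
  CIF CLH CIL CLL g0 a0.

Lemma round_step t st : realizable st ->
  realizable (round t st).1 /\
  (round t st).2 + potential (round t st).1 <= CIF + potential st.
Proof.
case: st => VM VP [[iM iM_VM iME] expert_VP]; rewrite /round /hg_round /=.
set mu := majority mM VM g0; set pis := fun g => majority mP (VP g) a0.
set recs := episode _ _ _ _ _ _ _.
case: ifP => [_ | failed]; first by split; [split; [exists iM|] | rewrite addrC].
have := failed_episode_mistake (negbT failed); rewrite -/recs.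
set lo := lo_process _ _ recs.
have lo_cost : CLH + lo.1%:R * CIL <= round_budget.
  rewrite lerD2l ler_wpM2r // ler_nat.
  exact: leq_trans (lo_process_count_le _ _ _) (size_episode _ _ _ _ _ _ _).
set VM' := halve mM VM _.
have iM_VM' : iM \in VM'.
  by rewrite /VM' -iME; exact: (mem_halve_self _ (fun x => x.1.1) _ iM_VM).
have meta_le : meta_potential VM' <= meta_potential VM.
  by apply: ler_log2_nat; [apply/card_gt0P; exists iM | exact/subset_leq_card/halve_subset].
case: lo.2 => [[g tau] [g_star mistake] | mistake] /=.
  have [iP iP_VP iPE] := expert_VP g.
  set VP' := [ffun g' => _].
  have VP'E g' : g' != g -> VP' g' = VP g' by move/negbTE => ne; rewrite ffunE ne.
  have iP_VP' : iP \in VP' g.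
    by rewrite ffunE eqxx -iPE; exact: (mem_halve_self _ fst _ iP_VP).
  have sub_drop : sub_potential VP' + 1 <= sub_potential VP.
    apply: sub_potential_halving VP'E _ _ => //; first by apply/card_gt0P; exists iP.
    by rewrite /VP' ffunE eqxx; apply: halve_mistake; rewrite has_map; exact: mistake.
  split.
    split=> [|g']; first by exists iM.
    by have [-> | /VP'E ->] := eqVneq g' g; [exists iP | exact: expert_VP].
  have sub_gap : 1 <= sub_potential VP - sub_potential VP' by lra.
  have CLL_le : CLL <= CLL * (sub_potential VP - sub_potential VP').
    by rewrite -[leLHS]mulr1 ler_wpM2l.
  suff: CLH + lo.1%:R * CIL + CLL + potential (VM', VP') <= potential (VM, VP).
    by lra.
  by apply: potential_decrease => /=; lra.
split; first by split; [exists iM | exact: expert_VP].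
have meta_drop : meta_potential VM' + 1 <= meta_potential VM.
  apply: log2_nat_double; first by apply/card_gt0P; exists iM.
  by apply: halve_mistake; rewrite has_map; exact: mistake.
suff: CLH + lo.1%:R * CIL + potential (VM', VP) <= potential (VM, VP) by lra.
by apply: potential_decrease => /=; lra.
Qed.

Hypotheses (meta_realizable : exists i, mM i = mustar)
  (sub_realizable : forall g, exists i, mP i = pistar g).

Let run := hg_run mM mP mustar pistar env s0 stop H_HI H_LO inspFull inspLO
  CIF CLH CIL CLL g0 a0.

Lemma run_potential T :
  realizable (run T).1 /\
  (run T).2 + potential (run T).1 <= T%:R * CIF + potential (run 0).1.
Proof.
elim: T => [|T [real_T bound_T]].
  split; last by rewrite /= add0r mul0r add0r.
  split=> [|g]; first by have [i iE] := meta_realizable; exists i; rewrite ?inE.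
  by have [i iE] := sub_realizable g; exists i; rewrite ?ffunE ?inE.
have [real_T' step_T] := round_step T.+1 real_T.
have [-> ->] : (run T.+1).1 = (round T.+1 (run T).1).1 /\
                (run T.+1).2 = (run T).2 + (round T.+1 (run T).1).2 by [].
split=> //; rewrite [T.+1%:R]mulrSr mulrDl mul1r; lra.
Qed.

Lemma potential_init :
  potential (run 0).1 =
  (log2 #|IM|%:R + #|Gstar mustar|%:R * log2 #|IP|%:R) * round_budget
  + (#|Gstar mustar|%:R * log2 #|IP|%:R) * CLL.
Proof.
rewrite /potential /meta_potential /sub_potential /= cardsT.
under eq_bigr do rewrite ffunE cardsT.
by rewrite sumr_const !mulr_natl [_ * round_budget]mulrC [_ * CLL]mulrC.
Qed.

End HgDaggerAnalysis.

Theorem theorem1 (R : realType) (S : Type) (A : eqType) (G : finType)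
  (IM IP : finType) (mM : IM -> S -> G) (mP : IP -> S -> A * bool)
  (mustar : S -> G) (pistar : G -> S -> A * bool)
  (env : nat -> S -> A -> S) (s0 : nat -> S) (stop : nat -> S -> bool)
  (H_HI H_LO : nat)
  (inspFull : nat -> seq (S * (A * bool)) -> bool)
  (inspLO : nat -> seq (S * (A * bool)) -> G -> bool)
  (CIF CLH CIL CLL : R) (g0 : G) (a0 : A * bool) (T : nat) :
  (* finite classes, indexed injectively: |M| = #|IM|, |Pi_LO| = #|IP| *)
  injective mM -> injective mP ->
  (* realizability *)
  (exists i, mM i = mustar) -> (forall g, exists i, mP i = pistar g) ->
  (* costs are nonnegative *)
  0 <= CIF -> 0 <= CLH -> 0 <= CIL -> 0 <= CLL ->
  (* expert consistency, low level: an execution of a subpolicy (in round t's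
     environment) agreeing with pi*_g on every visited state passes Inspect_LO *)
  (forall (t : nat) (pi : S -> A * bool) (s : S) (g : G),
      let tau := (rollout (env t) pi H_LO s).1 in
      all (fun q => q.2 == pistar g q.1) tau -> inspLO t tau g) ->
  (* expert consistency, full: an episode (of any hierarchical policy) in
     which every high-level choice agrees with mu* and every low-level
     execution passes Inspect_LO passes Inspect_FULL *)
  (forall (t : nat) (mu : S -> G) (pis : G -> S -> A * bool),
      let recs := episode (env t) (stop t) H_LO mu pis H_HI (s0 t) in
      all (fun x => (x.1.2 == mustar x.1.1) && inspLO t x.2 x.1.2) recs ->
      inspFull t (flatten [seq x.2 | x <- recs])) ->
  hg_cost mM mP mustar pistar env s0 stop H_HI H_LO inspFull inspLO
          CIF CLH CIL CLL g0 a0 T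
  <= T%:R * CIF
     + (log2 (#|IM|%:R : R) + #|Gstar mustar|%:R * log2 (#|IP|%:R : R))
       * (CLH + H_HI%:R * CIL)
     + (#|Gstar mustar|%:R * log2 (#|IP|%:R : R)) * CLL.
Proof.
move=> _ _ meta_real sub_real _ CLH_ge0 CIL_ge0 CLL_ge0 cons_LO cons_FULL.
have [real_T bound_T] := run_potential CIF g0 a0 CLH_ge0 CIL_ge0 CLL_ge0
  cons_LO cons_FULL meta_real sub_real T.
have := potential_ge0 H_HI CLH_ge0 CIL_ge0 CLL_ge0 real_T.
rewrite potential_init /round_budget in bound_T.
rewrite /hg_cost; lra.
Qed.
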